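(* Let $n>3$. Let $U_{2,2}$ be the irreducible $SL_n$-subrepresentation of the space of polynomial functions on $\mathfrak{sl}_n$ generated by the $2\times2$ minor $Z\mapsto Z_{1,n}Z_{2,n-1}-Z_{1,n-1}Z_{2,n}$. Then for every $f\in U_{2,2}$ and every $Z\in\overline{\mathbb{S}_{\mathrm{min}}(\mathfrak{sl}_n)}$ we have $f(Z)=0$.
   Context: $SL_n$ acts on functions on $\mathfrak{sl}_n$ via the adjoint action; the span of all $2\times2$ minors $Z_{i,j}Z_{k,l}-Z_{i,l}Z_{k,j}$ is an $SL_n$-representation isomorphic to $\wedge^2E^*\otimes\wedge^2E$ with $E=\mathbb{C}^n$, which decomposes as $V_{1,2}\oplus U_{2,2}$. The sheet closure is $$\overline{\mathbb{S}_{\mathrm{min}}(\mathfrak{sl}_n)}=\left\{R\begin{pmatrix}(n-1)Y_1 & Y_2&\cdots&Y_n\\ 0&-Y_1&&0\\ \vdots&&\ddots&\vdots\\ 0&\cdots&\cdots&-Y_1\end{pmatrix}R^{-1}\ \middle|\ Y_i\in\mathbb{C},\ R\in SL_n\right\},$$ the closure of the sheet of $\mathfrak{sl}_n$ containing the minimal nilpotent orbit. *)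

From HB Require Import structures.
From mathcomp Require Import all_boot all_order all_algebra.
From mathcomp Require Import complex.
From mathcomp Require Import reals.
Set Implicit Arguments. Unset Strict Implicit. Unset Printing Implicit Defensive.
Import GRing.Theory Num.Theory.
Local Open Scope ring_scope.

Section Defs.
Variable C : fieldType.

Definition in_sl (n : nat) (Z : 'M[C]_n) : Prop := \tr Z = 0.

Definition in_SL (n : nat) (g : 'M[C]_n) : Prop := \det g = 1.

(* The adjoint action of g on Z : g Z g^{-1}; functions are translated by
   (g . f)(Z) = f (g^{-1} Z g). *)
Definition Ad (n : nat) (g Z : 'M[C]_n) : 'M[C]_n := g *m Z *m invmx g.

(* The 2x2 minor  Z |-> Z_{1,n} Z_{2,n-1} - Z_{1,n-1} Z_{2,n}  (1-based indices),
   for matrices of size m.+1 = n.  Index n (1-based) is m (0-based),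
   index n-1 (1-based) is m-1 (0-based). *)
Definition minor_top (m : nat) (Z : 'M[C]_m.+1) : C :=
  Z (inord 0) (inord m) * Z (inord 1) (inord m.-1)
  - Z (inord 0) (inord m.-1) * Z (inord 1) (inord m).

(* U_{2,2}: the SL_n-subrepresentation of the polynomial functions on sl_n
   generated by minor_top, i.e. the linear span of the SL_n-translates
   Z |-> minor_top (g^{-1} Z g) of minor_top, as functions on sl_n. *)
Definition in_U22 (m : nat) (f : 'M[C]_m.+1 -> C) : Prop :=
  exists s : seq (C * 'M[C]_m.+1),
    (forall p, p \in s -> in_SL p.2) /\
    (forall Z, in_sl Z ->
       f Z = \sum_(p <- s) p.1 * minor_top (Ad (invmx p.2) Z)).

(* The matrix  [[(n-1)Y_1, Y_2, ..., Y_n]; [0, -Y_1, 0, ..., 0]; ...; [0, ..., 0, -Y_1]]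
   of size n = m.+1, with Y : 'I_n -> C, Y i = Y_{i+1} (0-based indexing). *)
Definition sheet_mx (m : nat) (Y : 'I_m.+1 -> C) : 'M[C]_m.+1 :=
  \matrix_(i < m.+1, j < m.+1)
    if i == ord0 then
      (if j == ord0 then m%:R * Y ord0 else Y j)
    else (if i == j then - Y ord0 else 0).

(* The closure of the sheet of sl_n containing the minimal nilpotent orbit,
   given (as in the paper) by  { R sheet_mx(Y) R^{-1} | Y in C^n, R in SL_n }. *)
Definition in_Smin_closure (m : nat) (Z : 'M[C]_m.+1) : Prop :=
  exists (Y : 'I_m.+1 -> C) (Rm : 'M[C]_m.+1),
    in_SL Rm /\ Z = Rm *m sheet_mx Y *m invmx Rm.
End Defs.

From HB Require Import structures.
From mathcomp Require Import all_boot all_order all_algebra.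
From mathcomp Require Import complex.
From mathcomp Require Import reals.
From mathcomp Require Import ring zify.
Set Implicit Arguments. Unset Strict Implicit.
Import GRing.Theory Num.Theory.
Local Open Scope ring_scope.

(* A matrix of the sheet closure is conjugate to sheet_mx Y, which is a scalar
   matrix plus the rank-one matrix e_1 v.  Conjugation preserves the shape
   c + u v, and off the diagonal such a matrix has entries u_i v_j.  Hence every
   2x2 minor whose row indices avoid its column indices vanishes on it; for
   n > 3 this is the case of the minor at rows 1, 2 and columns n-1, n, and every
   f in U_{2,2} is a combination of that minor evaluated at conjugates of Z. *)

Section ScalarPlusRankOne.
Variable C : fieldType.

Lemma scalar_rank1_offdiag n (c : C) (u : 'cV_n) (v : 'rV_n) i j :
  i != j -> (c%:M + u *m v) i j = u i 0 * v 0 j.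
Proof. by move=> ij; rewrite !mxE (negbTE ij) mulr0n add0r big_ord1. Qed.

Lemma conj_scalar_rank1 n (P Q : 'M[C]_n) c (u : 'cV_n) (v : 'rV_n) :
  P *m Q = 1%:M -> P *m (c%:M + u *m v) *m Q = c%:M + (P *m u) *m (v *m Q).
Proof.
move=> PQ; rewrite mulmxDr mulmxDl mul_mx_scalar -scalemxAl PQ.
by rewrite -!mulmxA scalemx1.
Qed.

Lemma minor_top_scalar_rank1 m c (u : 'cV[C]_m.+1) v :
  (2 < m)%N -> minor_top (c%:M + u *m v) = 0.
Proof.
move=> m_gt2; have ne a b : (a < m.+1)%N -> (b < m.+1)%N -> a != b ->
    (inord a : 'I_m.+1) != inord b by move=> ? ? ?; rewrite -val_eqE /= !inordK.
rewrite /minor_top !scalar_rank1_offdiag ?ne //; try lia.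
by rewrite mulrACA [X in _ - X]mulrACA [v 0 (inord m.-1) * _]mulrC subrr.
Qed.

Lemma sheet_mxE m (Y : 'I_m.+1 -> C) :
  sheet_mx Y = (- Y ord0)%:M
    + delta_mx ord0 0 *m \row_j (if j == ord0 then m.+1%:R * Y ord0 else Y j).
Proof.
apply/matrixP => i j; rewrite !mxE big_ord1 !mxE eqxx andbT.
have [Hi|ni] := eqVneq i ord0; have [Hj|nj] := eqVneq j ord0; rewrite ?Hi ?Hj.
- by rewrite mulr1n mul1r mulrSr; ring.
- by rewrite eq_sym (negbTE nj) mulr0n add0r mul1r.
- by rewrite (negbTE ni) mulr0n mul0r addr0.
- by rewrite mul0r addr0; case: (i == j); rewrite ?mulr1n ?mulr0n.
Qed.

Lemma mxtrace_sheet_mx m (Y : 'I_m.+1 -> C) : \tr (sheet_mx Y) = 0.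
Proof.
rewrite /mxtrace big_ord_recl !mxE eqxx.
under eq_bigr do rewrite mxE eq_sym (negbTE (neq_lift _ _)) eqxx.
by rewrite sumr_const card_ord mulNrn mulr_natl subrr.
Qed.

Lemma SL_unitmx n (g : 'M[C]_n) : in_SL g -> g \in unitmx.
Proof. by rewrite /in_SL unitmxE => ->; apply: unitr1. Qed.

End ScalarPlusRankOne.

Theorem mainTheorem7 (R : realType) (k : nat)
    (f : 'M[R[i]]_k.+4 -> R[i]) :
  in_U22 f ->
  forall Z : 'M[R[i]]_k.+4, in_Smin_closure Z -> f Z = 0.
Proof.
move=> [s [s_SL fE]] Z [Y [Rm [Rm_SL ->]]].
have Rm_unit := SL_unitmx Rm_SL.
rewrite fE; last by rewrite /in_sl mxtrace_mulC mulmxA mulVmx // mul1mx mxtrace_sheet_mx.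
rewrite big_seq big1 // => p /s_SL/SL_unitmx g_unit.
have conjE : Ad (invmx p.2) (Rm *m sheet_mx Y *m invmx Rm)
           = (invmx p.2 *m Rm) *m sheet_mx Y *m (invmx Rm *m p.2).
  by rewrite /Ad invmxK !mulmxA.
have inv_pair : (invmx p.2 *m Rm) *m (invmx Rm *m p.2) = 1%:M.
  by rewrite mulmxA -(mulmxA _ Rm) mulmxV // mulmx1 mulVmx.
by rewrite conjE sheet_mxE conj_scalar_rank1 // minor_top_scalar_rank1 ?mulr0.
Qed.
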